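(* Assume the setting of the context (in particular $\mathcal{R}(\bar{\mathbf{Y}}_{II})\succ\mathbf{0}$). Let $Y_0>0$, let $\mathbf{B}_I\in\mathbb{R}^{N_I\times N_I}$ be symmetric, and set $\mathbf{Y}_I=\mathrm{i}\mathbf{B}_I$. Define $$\mathbf{H}=\left(\mathbf{Y}_R+\mathbf{Y}_{RR}\right)^{-1}\Big(-\mathbf{Y}_{RT}+\mathbf{Y}_{RI}\big(\mathbf{Y}_I+\bar{\mathbf{Y}}_{II}\big)^{-1}\big(\mathbf{Y}_{IT}-\mathbf{Y}_{IR}(\mathbf{Y}_R+\mathbf{Y}_{RR})^{-1}\mathbf{Y}_{RT}\big)\Big).$$ (All inverses here exist.) Define $$\bar{\mathbf{B}}_I=Y_0\,\mathcal{R}(\bar{\mathbf{Y}}_{II})^{-1/2}\big(\mathbf{B}_I+\mathcal{I}(\bar{\mathbf{Y}}_{II})\big)\mathcal{R}(\bar{\mathbf{Y}}_{II})^{-1/2},\qquad \bar{\boldsymbol{\Theta}}=(Y_0\mathbf{I}+\mathrm{i}\bar{\mathbf{B}}_I)^{-1}(Y_0\mathbf{I}-\mathrm{i}\bar{\mathbf{B}}_I),$$ $$\bar{\mathbf{Y}}_{RT}=2Y_0(\mathbf{Y}_R+\mathbf{Y}_{RR})^{-1}\mathbf{Y}_{RT},\quad \bar{\mathbf{Y}}_{RI}=\sqrt2\,Y_0(\mathbf{Y}_R+\mathbf{Y}_{RR})^{-1}\mathbf{Y}_{RI}\mathcal{R}(\bar{\mathbf{Y}}_{II})^{-1/2},$$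 $$\bar{\mathbf{Y}}_{IT}=\sqrt2\,Y_0\,\mathcal{R}(\bar{\mathbf{Y}}_{II})^{-1/2}\big(\mathbf{Y}_{IT}-\mathbf{Y}_{IR}(\mathbf{Y}_R+\mathbf{Y}_{RR})^{-1}\mathbf{Y}_{RT}\big),$$ $$\bar{\mathbf{H}}_{RT}=-\tfrac{1}{2Y_0}\Big(\bar{\mathbf{Y}}_{RT}-\tfrac{1}{2Y_0}\bar{\mathbf{Y}}_{RI}\bar{\mathbf{Y}}_{IT}\Big),\quad \bar{\mathbf{H}}_{RI}=-\tfrac{1}{2Y_0}\bar{\mathbf{Y}}_{RI},\quad \bar{\mathbf{H}}_{IT}=-\tfrac{1}{2Y_0}\bar{\mathbf{Y}}_{IT}.$$ Then $\mathbf{H}=\bar{\mathbf{H}}_{RT}+\bar{\mathbf{H}}_{RI}\bar{\boldsymbol{\Theta}}\bar{\mathbf{H}}_{IT}$.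
   Context: Setting: $N_T,N_I,N_R$ positive integers, $N=N_T+N_I+N_R$; $\mathbf{Y}\in\mathbb{C}^{N\times N}$ complex symmetric with $\mathcal{R}(\mathbf{Y})$ positive definite, partitioned into blocks $\mathbf{Y}_{ab}\in\mathbb{C}^{N_a\times N_b}$, $a,b\in\{T,I,R\}$; $\mathbf{Y}_R\in\mathbb{R}^{N_R\times N_R}$ diagonal with positive diagonal entries; $\bar{\mathbf{Y}}_{II}:=\mathbf{Y}_{II}-\mathbf{Y}_{IR}(\mathbf{Y}_{RR}+\mathbf{Y}_R)^{-1}\mathbf{Y}_{RI}$. $\mathcal{R}(\cdot),\mathcal{I}(\cdot)$ denote entrywise real and imaginary parts; for a real symmetric positive definite $\mathbf{P}$, $\mathbf{P}^{-1/2}$ is the inverse of its unique positive definite square root. $\mathsf{i}$ is the imaginary unit. *)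

From HB Require Import structures.
From mathcomp Require Import all_boot all_order all_algebra.
From mathcomp Require Import complex.
Set Implicit Arguments. Unset Strict Implicit. Unset Printing Implicit Defensive.
Import Order.TTheory GRing.Theory Num.Theory.
Local Open Scope ring_scope.
Local Open Scope complex_scope.

Definition posdef (R : realFieldType) (n : nat) (A : 'M[R]_n) : Prop :=
  A^T = A /\ forall v : 'cV[R]_n, v != 0 -> 0 < (v^T *m A *m v) 0 0.

Definition Remx (R : rcfType) (m n : nat) (A : 'M[R[i]]_(m, n)) : 'M[R]_(m, n) :=
  map_mx (fun z : R[i] => complex.Re z) A.
Definition Immx (R : rcfType) (m n : nat) (A : 'M[R[i]]_(m, n)) : 'M[R]_(m, n) :=
  map_mx (fun z : R[i] => complex.Im z) A.
Definition Cmx (R : rcfType) (m n : nat) (A : 'M[R]_(m, n)) : 'M[R[i]]_(m, n) :=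
  map_mx (fun x => x%:C) A.

(* The unique positive definite square root S of a positive definite P is
   characterised by: S positive definite and S *m S = P. *)
Definition is_pd_sqrt (R : realFieldType) (n : nat) (P S : 'M[R]_n) : Prop :=
  posdef S /\ S *m S = P.

From HB Require Import structures.
From mathcomp Require Import all_boot all_order all_algebra.
From mathcomp Require Import complex.
From mathcomp Require Import ring.
Import Order.TTheory GRing.Theory Num.Theory.
Local Open Scope ring_scope.
Local Open Scope complex_scope.

(* Write [Re(Ybar_II) = S^2] with [S] the positive definite square root and
   [T = S^-1 (B_I + Im(Ybar_II)) S^-1], a real symmetric matrix.  Then
   [Y_I + Ybar_II = S (1 + iT) S], where [1 + iT] is invertible because
   [(1 + iT)(1 - iT) = 1 + T^T T] is positive definite.  Since
   [Bbar_I = Y0 T], the matrix [Thetabar] is the Cayley transform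
   [(1 + iT)^-1 (1 - iT) = 2 (1 + iT)^-1 - 1], and both sides of the identity
   become [-A + P (1 + iT)^-1 Q] for the same [A], [P] and [Q] once the
   scalar factors [2 Y0], [sqrt 2 Y0] and [-(2 Y0)^-1] are collected. *)

Section ComplexifiedMatrices.
Context {R : rcfType}.

Lemma CmxM m n p (A : 'M[R]_(m, n)) (B : 'M[R]_(n, p)) :
  Cmx (A *m B) = Cmx A *m Cmx B.
Proof. exact: (map_mxM (real_complex R)). Qed.

Lemma CmxD m n (A B : 'M[R]_(m, n)) : Cmx (A + B) = Cmx A + Cmx B.
Proof. exact: (map_mxD (real_complex R)). Qed.

Lemma CmxZ m n a (A : 'M[R]_(m, n)) : Cmx (a *: A) = a%:C *: Cmx A.
Proof. exact: (map_mxZ (real_complex R)). Qed.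

Lemma Cmx1 n : Cmx (1%:M : 'M[R]_n) = 1%:M.
Proof. exact: (map_mx1 (real_complex R)). Qed.

Lemma Cmx_inv n (A : 'M[R]_n) : Cmx (invmx A) = invmx (Cmx A).
Proof. exact: (map_invmx (real_complex R)). Qed.

Lemma Cmx_unitmx n (A : 'M[R]_n) : (Cmx A \in unitmx) = (A \in unitmx).
Proof. exact: (map_unitmx (real_complex R)). Qed.

Lemma Cmx_tr m n (A : 'M[R]_(m, n)) : Cmx A^T = (Cmx A)^T.
Proof. by apply/matrixP => a b; rewrite !mxE. Qed.

Lemma Immx_tr m n (A : 'M[R[i]]_(m, n)) : Immx A^T = (Immx A)^T.
Proof. by apply/matrixP => a b; rewrite !mxE. Qed.

Lemma Cmx_ReIm m n (A : 'M[R[i]]_(m, n)) :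
  A = Cmx (Remx A) + (0 +i* 1) *: Cmx (Immx A).
Proof. by apply/matrixP => a b; rewrite !mxE; case: (A a b) => x y; simpc. Qed.

Lemma factor_by_real_sqrt n (B : 'M[R]_n) (M : 'M[R[i]]_n) (S : 'M[R]_n) :
  S \in unitmx -> S *m S = Remx M ->
  (0 +i* 1) *: Cmx B + M
  = Cmx S *m (1%:M + (0 +i* 1) *: Cmx (invmx S *m (B + Immx M) *m invmx S))
    *m Cmx S.
Proof.
move=> uS SS; rewrite mulmxDr mulmx1 mulmxDl -CmxM SS -scalemxAr -scalemxAl.
rewrite -!CmxM !mulmxA mulmxV // mul1mx -mulmxA mulVmx // mulmx1 CmxD scalerDr.
by rewrite {1}(Cmx_ReIm _ _ M) addrCA.
Qed.

End ComplexifiedMatrices.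

Section PositiveDefinite.
Context {R : realFieldType}.

Lemma mulmx_trmx_ge0 n (v : 'rV[R]_n) : 0 <= (v *m v^T) 0 0.
Proof. by rewrite mxE; apply: sumr_ge0 => j _; rewrite mxE -expr2 sqr_ge0. Qed.

Lemma mulmx_trmx_eq0 n (v : 'rV[R]_n) : ((v *m v^T) 0 0 == 0) = (v == 0).
Proof.
apply/idP/eqP => [|->]; last by rewrite mul0mx mxE.
rewrite mxE psumr_eq0 => [/allP vv0|j _]; last by rewrite mxE -expr2 sqr_ge0.
apply/rowP => k; have /implyP/(_ isT) := vv0 k (mem_index_enum _).
by rewrite !mxE mulf_eq0 orbb => /eqP.
Qed.

Lemma posdef_unitmx n (A : 'M[R]_n) : posdef A -> A \in unitmx.
Proof.
move=> [_ Apos]; rewrite unitmxE unitfE; apply/negP => /det0P [v v0 vA].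
have vT0 : v^T != 0 by rewrite -(inj_eq trmx_inj) trmxK trmx0.
by have := Apos _ vT0; rewrite trmxK vA mul0mx mxE ltxx.
Qed.

Lemma unitmx_1_add_trmx_mul n (T : 'M[R]_n) : 1%:M + T^T *m T \in unitmx.
Proof.
rewrite unitmxE unitfE; apply/negP => /det0P [v v0 vA].
have : (v *m (1%:M + T^T *m T) *m v^T) 0 0 = 0 by rewrite vA mul0mx mxE.
rewrite mulmxDr mulmx1 mulmxDl mxE.
have -> : v *m (T^T *m T) *m v^T = (v *m T^T) *m (v *m T^T)^T.
  by rewrite trmx_mul trmxK !mulmxA.
move/eqP; rewrite paddr_eq0 ?mulmx_trmx_ge0 // mulmx_trmx_eq0 => /andP[/eqP v0' _].
by rewrite v0' eqxx in v0.
Qed.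

End PositiveDefinite.

Section UnitMatrices.
Context {F : comUnitRingType}.

Lemma invmxM n (A B : 'M[F]_n) : A \in unitmx -> B \in unitmx ->
  invmx (A *m B) = invmx B *m invmx A.
Proof.
move=> uA uB; have uAB : A *m B \in unitmx by rewrite unitmx_mul uA.
have VAB : invmx B *m invmx A *m (A *m B) = 1%:M.
  by rewrite mulmxA -(mulmxA _ (invmx A)) mulVmx // mulmx1 mulVmx.
by rewrite -[LHS]mul1mx -VAB mulmxK.
Qed.

Lemma trmx_schur p q (A : 'M[F]_p) (B : 'M[F]_(p, q)) (C : 'M[F]_(q, p))
    (W : 'M[F]_q) :
  A^T = A -> C^T = B -> W^T = W ->
  (A - B *m invmx W *m C)^T = A - B *m invmx W *m C.
Proof.
move=> At CtB Wt; rewrite linearB /= !trmx_mul trmx_inv At Wt CtB.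
by rewrite -CtB trmxK mulmxA.
Qed.

Lemma block3_trmx_sym m1 m2 m3 (A : 'M[F]_m1) (B : 'M[F]_(m1, m2))
    (C : 'M[F]_(m2, m1)) (D : 'M[F]_m2) (E : 'M[F]_(m1, m3))
    (G : 'M[F]_(m2, m3)) (H : 'M[F]_(m3, m1)) (J : 'M[F]_(m3, m2))
    (K : 'M[F]_m3) :
  let Y := block_mx (block_mx A B C D) (col_mx E G) (row_mx H J) K in
  Y^T = Y -> [/\ D^T = D, J^T = G & K^T = K].
Proof.
rewrite /= !tr_block_mx tr_col_mx tr_row_mx => /eq_block_mx[YTI_TI YTI_R _ KT].
have [_ _ _ DT] := eq_block_mx YTI_TI.
by have [_ JT] := eq_col_mx YTI_R.
Qed.

Context {j : F} {n : nat}.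
Hypothesis jj : j * j = -1.

Lemma mulmx_1_add_sub_scale (T : 'M[F]_n) :
  (1%:M + j *: T) *m (1%:M - j *: T) = 1%:M + T *m T.
Proof.
rewrite mulmxDl mulmxBr mulmxBr !mul1mx mulmx1 -!scalemxAl -!scalemxAr.
by rewrite scalerA jj scaleN1r opprK addrA subrK.
Qed.

Lemma unitmx_1_add_scale (T : 'M[F]_n) :
  1%:M + T *m T \in unitmx -> 1%:M + j *: T \in unitmx.
Proof.
move=> uTT; rewrite -(mulmx_1_add_sub_scale T) in uTT.
by rewrite unitmx_mul in uTT; case/andP: uTT.
Qed.

Lemma cayleyE (a : F) (X : 'M[F]_n) : a \is a GRing.unit ->
  1%:M + X \in unitmx ->
  invmx (a *: 1%:M + a *: X) *m (a *: 1%:M - a *: X)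
  = 2%:R *: invmx (1%:M + X) - 1%:M.
Proof.
move=> ua uK; rewrite -scalerDr -scalerBr invmxZ ?unitmxZ //.
have -> : 1%:M - X = 2%:R *: 1%:M - (1%:M + X).
  by rewrite scaler_nat mulr2n opprD addrACA subrr add0r.
rewrite -scalemxAl -scalemxAr scalerA mulVr // scale1r mulmxBr mulVmx //.
by rewrite -scalemxAr mulmx1.
Qed.

End UnitMatrices.

Lemma neg_add_mulmx_rescale (F : fieldType) m n q (A : 'M[F]_(m, q))
    (P : 'M[F]_(m, n)) (X : 'M[F]_n) (Q : 'M[F]_(n, q)) (a b c s : F) :
  (2 : F) != 0 -> c * a = -1 -> b = - c -> c * s * (c * s) * 2 = 1 ->
  - A + P *m X *m Q
  = c *: (a *: A - b *: ((s *: P) *m (s *: Q)))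
    + (c *: (s *: P)) *m (2%:R *: X - 1%:M) *m (c *: (s *: Q)).
Proof.
move=> two0 ca bc cs2.
have cs : c * s * (c * s) = 2^-1 by apply: (mulIf two0); rewrite mulVf.
have cbs : c * (b * s * s) = - 2^-1 by rewrite -cs bc; ring.
rewrite mulmxBr mulmxBl mulmx1 -!scalemxAl -!scalemxAr !scalerA scalerBr.
rewrite !scalerA ca cbs cs scaleN1r -scalemxAl scalerA mulVf // scale1r.
by rewrite scaleNr opprK -addrA [X in _ = _ + X]addrC subrK.
Qed.

Lemma rescale_scalars (R : rcfType) (Y0 : R) : Y0 != 0 ->
  let c := (- (2 * Y0)^-1)%:C in
  [/\ c * (2 * Y0)%:C = -1, ((2 * Y0)^-1)%:C = - c
    & c * (Num.sqrt 2 * Y0)%:C * (c * (Num.sqrt 2 * Y0)%:C) * 2 = 1].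
Proof.
move=> Y0n c; have r2 : Num.sqrt 2 * Num.sqrt 2 = 2 :> R.
  by rewrite -expr2 sqr_sqrtr // ler0n.
split; rewrite /c.
- by rewrite -rmorphM mulNr mulVf ?mulf_neq0 ?pnatr_eq0 // rmorphN1.
- by rewrite rmorphN opprK.
rewrite -!rmorphM -(rmorph_nat (real_complex R) 2) -rmorphM.
have -> : - (2 * Y0)^-1 * (Num.sqrt 2 * Y0) * (- (2 * Y0)^-1 * (Num.sqrt 2 * Y0)) * 2
    = 1 :> R.
  transitivity ((Num.sqrt 2 * Num.sqrt 2) * 2 / (2 * Y0) ^+ 2 * (Y0 * Y0)).
    by field.
  by rewrite r2; field.
exact: rmorph1.
Qed.

Theorem proposition1 (R : rcfType) (NT NI NR : nat)
  (YTT : 'M[R[i]]_(NT, NT)) (YTI : 'M[R[i]]_(NT, NI)) (YTR : 'M[R[i]]_(NT, NR))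
  (YIT : 'M[R[i]]_(NI, NT)) (YII : 'M[R[i]]_(NI, NI)) (YIR : 'M[R[i]]_(NI, NR))
  (YRT : 'M[R[i]]_(NR, NT)) (YRI : 'M[R[i]]_(NR, NI)) (YRR : 'M[R[i]]_(NR, NR))
  (YR : 'M[R]_NR) (BI : 'M[R]_NI) (Y0 : R) (S : 'M[R]_NI) :
  (0 < NT)%N -> (0 < NI)%N -> (0 < NR)%N ->
  let Y : 'M[R[i]]_(NT + NI + NR) :=
    block_mx (block_mx YTT YTI YIT YII) (col_mx YTR YIR)
             (row_mx YRT YRI) YRR in
  Y^T = Y ->
  posdef (Remx Y) ->
  is_diag_mx YR -> (forall k : 'I_NR, 0 < YR k k) ->
  let YRRi := invmx (Cmx YR + YRR) in
  let YbII := YII - YIR *m YRRi *m YRI in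
  posdef (Remx YbII) ->
  0 < Y0 ->
  BI^T = BI ->
  is_pd_sqrt (Remx YbII) S ->
  let Pih := invmx S in (* R(YbII)^{-1/2} *)
  let YI := (0 +i* 1) *: Cmx BI in
  let H := YRRi *m (- YRT + YRI *m invmx (YI + YbII) *m (YIT - YIR *m YRRi *m YRT)) in
  let BbI := Y0 *: (Pih *m (BI + Immx YbII) *m Pih) in
  let Thb := invmx (Y0%:C *: 1%:M + (0 +i* 1) *: Cmx BbI) *m (Y0%:C *: 1%:M - (0 +i* 1) *: Cmx BbI) in
  let YbRT := (2 * Y0)%:C *: (YRRi *m YRT) in
  let YbRI := (Num.sqrt 2 * Y0)%:C *: (YRRi *m YRI *m Cmx Pih) in
  let YbIT := (Num.sqrt 2 * Y0)%:C *: (Cmx Pih *m (YIT - YIR *m YRRi *m YRT)) in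
  let c := (- (2 * Y0)^-1)%:C in
  let HbRT := c *: (YbRT - ((2 * Y0)^-1)%:C *: (YbRI *m YbIT)) in
  let HbRI := c *: YbRI in
  let HbIT := c *: YbIT in
  H = HbRT + HbRI *m Thb *m HbIT.
Proof.
move=> _ _ _ Y Ysym _ YRdiag _ YRRi YbII _ Y0pos BIsym [Spd SS] Pih YI H BbI Thb
  YbRT YbRI YbIT c HbRT HbRI HbIT.
have [Ssym _] := Spd; have /posdef_unitmx uS := Spd.
have YRsym : YR^T = YR by case/diag_mxP: YRdiag => d ->; rewrite tr_diag_mx.
have /block3_trmx_sym[YIIsym YRIt YRRsym] := Ysym.
have YbIIsym : YbII^T = YbII.
  by apply: trmx_schur => //; rewrite linearD /= -Cmx_tr YRsym YRRsym.
set j : R[i] := 0 +i* 1; have jj : j * j = -1 by rewrite /j; simpc.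
set T := Pih *m (BI + Immx YbII) *m Pih.
have Tsym : T^T = T.
  by rewrite !trmx_mul trmx_inv Ssym linearD /= BIsym -Immx_tr YbIIsym mulmxA.
set K := 1%:M + j *: Cmx T.
have uK : K \in unitmx.
  apply: (unitmx_1_add_scale jj); rewrite -CmxM -Cmx1 -CmxD Cmx_unitmx -{1}Tsym.
  exact: unitmx_1_add_trmx_mul.
have invYbII : invmx (YI + YbII) = Cmx Pih *m invmx K *m Cmx Pih.
  rewrite /YI (factor_by_real_sqrt _ BI _ _ uS SS) -/T -/j -/K.
  by rewrite !invmxM ?unitmx_mul ?Cmx_unitmx ?uS // Cmx_inv mulmxA.
have ThbE : Thb = 2%:R *: invmx K - 1%:M.
  rewrite /Thb /BbI CmxZ scalerA mulrC -scalerA; apply: cayleyE => //.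
  by rewrite unitfE eq_complex /= eqxx andbT gt_eqF.
rewrite /H invYbII ThbE /HbRT /HbRI /HbIT /YbRT /YbRI /YbIT.
set Q := YIT - YIR *m YRRi *m YRT.
have -> : YRRi *m (- YRT + YRI *m (Cmx Pih *m invmx K *m Cmx Pih) *m Q)
    = - (YRRi *m YRT) + (YRRi *m YRI *m Cmx Pih) *m invmx K *m (Cmx Pih *m Q).
  by rewrite mulmxDr mulmxN !mulmxA.
have /rescale_scalars[ca bc cs] : Y0 != 0 by rewrite gt_eqF.
by apply: neg_add_mulmx_rescale ca bc cs; rewrite pnatr_eq0.
Qed.
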